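(* Let $(\Omega,\Sigma,\mu)$ be a measure space with $\mu$ a positive countably additive measure, let $\rho:\Omega\to[0,\infty)$ be measurable, and let $f,g_1,\dots,g_n,h$ be real-valued measurable functions on $\Omega$ with $\int_\Omega\rho|u|^2\,d\mu<\infty$ for each $u\in\{f,g_1,\dots,g_n,h\}$. Writing $\int_\Omega\rho uv\,d\mu$ for $\int_\Omega\rho(s)u(s)v(s)\,d\mu(s)$, we have \[ \sum_{i=1}^n\begin{vmatrix}\int_\Omega\rho fg_i\,d\mu & \int_\Omega\rho fh\,d\mu\\ \int_\Omega\rho g_ih\,d\mu & \int_\Omega\rho h^2\,d\mu\end{vmatrix}^2 \le \begin{vmatrix}\int_\Omega\rho f^2\,d\mu & \int_\Omega\rho fh\,d\mu\\ \int_\Omega\rho fh\,d\mu & \int_\Omega\rho h^2\,d\mu\end{vmatrix} \times\left\{\max_{1\le i\le n}\begin{vmatrix}\int_\Omega\rho g_i^2\,d\mu & \int_\Omega\rho g_ih\,d\mu\\ \int_\Omega\rho g_ih\,d\mu & \int_\Omega\rho h^2\,d\mu\end{vmatrix} +\Bigg(\sum_{1\le i\ne j\le n}\begin{vmatrix}\int_\Omega\rho g_jg_i\,d\mu & \int_\Omega\rho g_jh\,d\mu\\ \int_\Omega\rho g_ih\,d\mu & \int_\Omega\rho h^2\,d\mu\end{vmatrix}^2\Bigg)^{1/2}\right\}. \]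
   Context: $\begin{vmatrix}a&b\\c&d\end{vmatrix}=ad-bc$ denotes a $2\times2$ determinant. The sum $\sum_{1\le i\ne j\le n}$ runs over all ordered pairs $(i,j)$ with $i\ne j$. *)

From HB Require Import structures.
From mathcomp Require Import all_boot all_order all_algebra.
From mathcomp Require Import all_classical all_reals all_analysis.
Set Implicit Arguments. Unset Strict Implicit. Unset Printing Implicit Defensive.
Import Order.TTheory GRing.Theory Num.Theory.
Local Open Scope ring_scope.

Definition det2 (R : ringType) (a b c d : R) : R := a * d - b * c.

Definition wint (d : measure_display) (T : measurableType d) (R : realType)
  (mu : {measure set T -> \bar R}) (rho u v : T -> R) : R :=
  Rintegral mu setT (fun s => rho s * u s * v s).

From HB Require Import structures.
From mathcomp Require Import all_boot all_order all_algebra.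
From mathcomp Require Import all_classical all_reals all_analysis.
From mathcomp Require Import measurable_realfun ring lra.
Set Implicit Arguments.
Unset Strict Implicit.
Unset Printing Implicit Defensive.
Import Order.TTheory GRing.Theory Num.Theory.
Local Open Scope ring_scope.

(* The determinants in the statement are the values of the Gram form
   [Q_h(x, y) = <x, y><h, h> - <x, h><y, h>] of the weighted product
   [<u, v> = \int rho u v], and by Cauchy-Schwarz [Q_h] is again a positive
   semidefinite symmetric bilinear form.  So it suffices to prove, for any such
   form [Q], Bombieri's inequality
     [sum_i Q(f, g_i)^2 <= Q(f, f) (max_i Q(g_i, g_i)
                                    + (sum_(i <> j) Q(g_j, g_i)^2)^(1/2))].
   With [c_i = Q(f, g_i)] and [v = sum_i c_i g_i] we get [Q(v, f) = sum_i c_i^2 = S],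
   hence [S^2 <= Q(f, f) Q(v, v)] by Cauchy-Schwarz.  In
   [Q(v, v) = sum_(i, j) c_i c_j Q(g_j, g_i)] the diagonal is at most
   [S max_i Q(g_i, g_i)], and by Cauchy-Schwarz for finite sums the off-diagonal
   part is at most [S (sum_(i <> j) Q(g_j, g_i)^2)^(1/2)]. *)

Lemma sqr_le_mul_of_quadratic_ge0 (R : realFieldType) (a b c : R) : 0 <= c ->
  (forall t, 0 <= a + 2 * t * b + t ^+ 2 * c) -> b ^+ 2 <= a * c.
Proof.
move=> c_ge0 q_ge0; have [c0|c_neq0] := eqVneq c 0.
  rewrite c0 in q_ge0 *; have [->|b_neq0] := eqVneq b 0.
    by rewrite expr0n mulr0.
  have := q_ge0 (- (a + 1) / (2 * b)).
  suff -> : a + 2 * (- (a + 1) / (2 * b)) * b + (- (a + 1) / (2 * b)) ^+ 2 * 0 = -1.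
    by rewrite ler0N1.
  by field.
have := mulr_ge0 c_ge0 (q_ge0 (- b / c)).
suff -> : c * (a + 2 * (- b / c) * b + (- b / c) ^+ 2 * c) = a * c - b ^+ 2.
  by rewrite subr_ge0.
by field.
Qed.

Section SemiInnerProduct.
Variables (R : realFieldType) (V : lmodType R).

Definition lincomb_closed (P : set V) :=
  P 0 /\ forall a x y, P x -> P y -> P (a *: x + y).

Definition semi_inner_product (P : set V) (Q : V -> V -> R) :=
  [/\ forall x y, P x -> P y -> Q x y = Q y x,
      forall a x y z, P x -> P y -> P z -> Q (a *: x + y) z = a * Q x z + Q y z
    & forall x, P x -> 0 <= Q x x].

Definition gram_det (Q : V -> V -> R) (h x y : V) :=
  det2 (Q x y) (Q x h) (Q y h) (Q h h).

Variables (P : set V) (Q : V -> V -> R).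
Hypotheses (P_closed : lincomb_closed P) (Q_sip : semi_inner_product P Q).

Lemma lincomb_closed_sum (I : Type) (r : seq I) (c : I -> R) (u : I -> V) :
  (forall i, P (u i)) -> P (\sum_(i <- r) c i *: u i).
Proof.
have [P0 PD] := P_closed; move=> Pu; apply: big_ind => //.
- by move=> x y Px Py; rewrite -[x]scale1r; apply: PD.
- by move=> i _; rewrite -[_ *: _]addr0; apply: PD.
Qed.

Lemma sip_suml (I : Type) (r : seq I) (c : I -> R) (u : I -> V) z :
  (forall i, P (u i)) -> P z ->
  Q (\sum_(i <- r) c i *: u i) z = \sum_(i <- r) c i * Q (u i) z.
Proof.
have [P0 _] := P_closed; have [_ Q_lin _] := Q_sip; move=> Pu Pz.
elim: r => [|i r IHr]; last first.
  by rewrite !big_cons Q_lin ?IHr //; apply: lincomb_closed_sum.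
rewrite !big_nil; have := Q_lin (-1) 0 0 z P0 P0 Pz.
by rewrite scaler0 addr0 mulN1r addNr.
Qed.

Lemma sip_CauchySchwarz x y : P x -> P y -> Q x y ^+ 2 <= Q x x * Q y y.
Proof.
have [_ PD] := P_closed; have [Q_sym Q_lin Q_ge0] := Q_sip; move=> Px Py.
apply: sqr_le_mul_of_quadratic_ge0; first exact: Q_ge0.
move=> t; have Pw := PD t y x Py Px; have := Q_ge0 _ Pw.
rewrite Q_lin // (Q_sym y) // (Q_sym x) // !Q_lin // (Q_sym y x) //.
by congr (0 <= _); ring.
Qed.

Lemma gram_det_sip h : P h -> semi_inner_product P (gram_det Q h).
Proof.
have [Q_sym Q_lin Q_ge0] := Q_sip; move=> Ph; rewrite /gram_det /det2; split.
- by move=> x y Px Py; rewrite (Q_sym x y) // [Q x h * _]mulrC.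
- move=> a x y z Px Py Pz; rewrite !Q_lin //; ring.
- by move=> x Px; rewrite subr_ge0 -expr2; apply: sip_CauchySchwarz.
Qed.

End SemiInnerProduct.

Lemma sum_CauchySchwarz (R : realFieldType) (I : Type) (r : seq I) (p : pred I)
    (x y : I -> R) :
  (\sum_(i <- r | p i) x i * y i) ^+ 2
  <= (\sum_(i <- r | p i) x i ^+ 2) * (\sum_(i <- r | p i) y i ^+ 2).
Proof.
pose Q (u v : I -> R^o) := \sum_(i <- r | p i) u i * v i.
have setT_closed : lincomb_closed (@setT (I -> R^o)) by [].
have Q_sip : semi_inner_product setT Q.
  split=> [u v _ _|a u v w _ _ _|u _].
  - by apply: eq_bigr => i _; rewrite mulrC.
  - by rewrite /Q mulr_sumr -big_split; apply: eq_bigr => i _; rewrite mulrDl mulrA.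
  - by apply: sumr_ge0 => i _; rewrite -expr2 sqr_ge0.
have := sip_CauchySchwarz setT_closed Q_sip (x := x) (y := y) Logic.I Logic.I.
by rewrite /Q; under [X in _ <= X * _]eq_bigr do rewrite -expr2;
   under [X in _ <= _ * X]eq_bigr do rewrite -expr2.
Qed.

Lemma quadratic_form_le_maxdiag_offdiag (R : rcfType) (I : finType)
    (c : I -> R) (G : I -> I -> R) :
  \sum_i c i * \sum_j c j * G j i
  <= (\sum_i c i ^+ 2) * (\big[Num.max/0]_i G i i
                          + Num.sqrt (\sum_i \sum_(j | j != i) G j i ^+ 2)).
Proof.
set S := \sum_i c i ^+ 2; set Y := \sum_i \sum_(j | j != i) G j i ^+ 2.
set offdiag := \sum_i \sum_(j | j != i) (c i * c j) * G j i.
have -> : \sum_i c i * \sum_j c j * G j i = \sum_i c i ^+ 2 * G i i + offdiag.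
  rewrite -big_split; apply: eq_bigr => i _ /=.
  rewrite (bigD1 i) //= mulrDr mulrA -expr2 mulr_sumr; congr (_ + _).
  by apply: eq_bigr => j _; rewrite mulrA.
rewrite mulrDr; apply: lerD.
  rewrite mulr_suml; apply: ler_sum => i _.
  by apply: ler_wpM2l; [exact: sqr_ge0 | exact: le_bigmax].
have S_ge0 : 0 <= S by apply: sumr_ge0 => i _; exact: sqr_ge0.
have offdiag_sq : \sum_i \sum_(j | j != i) (c i * c j) ^+ 2 <= S ^+ 2.
  have -> : S ^+ 2 = \sum_i \sum_j (c i * c j) ^+ 2.
    rewrite expr2 mulr_suml; apply: eq_bigr => i _.
    by rewrite mulr_sumr; apply: eq_bigr => j _; rewrite exprMn.
  apply: ler_sum => i _; rewrite [leRHS](bigD1 i) //= lerDr.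
  exact: sqr_ge0.
have CS : offdiag ^+ 2 <= S ^+ 2 * Y.
  apply: le_trans (ler_wpM2r _ offdiag_sq); last first.
    by apply: sumr_ge0 => i _; apply: sumr_ge0 => j _; exact: sqr_ge0.
  rewrite /offdiag /Y !pair_big_dep; exact: sum_CauchySchwarz.
rewrite -(ger0_norm S_ge0) -sqrtr_sqr -sqrtrM ?sqr_ge0 //.
by apply: (le_trans (ler_norm _)); rewrite -sqrtr_sqr ler_wsqrtr.
Qed.

Section Bombieri.
Variables (R : rcfType) (V : lmodType R) (P : set V) (Q : V -> V -> R).
Hypotheses (P_closed : lincomb_closed P) (Q_sip : semi_inner_product P Q).

Lemma sip_bombieri (I : finType) (f : V) (g : I -> V) :
  P f -> (forall i, P (g i)) ->
  \sum_i Q f (g i) ^+ 2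
  <= Q f f * (\big[Num.max/0]_i Q (g i) (g i)
              + Num.sqrt (\sum_i \sum_(j | j != i) Q (g j) (g i) ^+ 2)).
Proof.
move=> Pf Pg; have [Q_sym _ Q_ge0] := Q_sip; have Q_suml := sip_suml P_closed Q_sip.
set S := \sum_i Q f (g i) ^+ 2; set K := (\big[Num.max/0]_i _ + _).
pose v := \sum_i Q f (g i) *: g i.
have Pv : P v by exact: lincomb_closed_sum.
have Qvf : Q v f = S.
  by rewrite Q_suml //; apply: eq_bigr => i _; rewrite Q_sym // expr2.
have Qvv_le : Q v v <= S * K.
  have -> : Q v v = \sum_i Q f (g i) * \sum_j Q f (g j) * Q (g j) (g i).
    by rewrite Q_suml //; apply: eq_bigr => i _; rewrite (Q_sym (g i)) // Q_suml.
  exact: quadratic_form_le_maxdiag_offdiag.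
have K_ge0 : 0 <= K.
  by apply: addr_ge0; [exact: bigmax_ge_id | exact: sqrtr_ge0].
have S_ge0 : 0 <= S by apply: sumr_ge0 => i _; exact: sqr_ge0.
have := sip_CauchySchwarz P_closed Q_sip Pv Pf; rewrite Qvf => CS.
have Qff_ge0 := Q_ge0 f Pf; have := mulr_ge0 Qff_ge0 K_ge0; nra.
Qed.

End Bombieri.

Section WeightedL2.
Variables (d : measure_display) (T : measurableType d) (R : realType).
Variables (mu : {measure set T -> \bar R}) (rho : T -> R).
Hypotheses (rho_meas : measurable_fun setT rho) (rho_ge0 : forall s, 0 <= rho s).

Definition weighted_L2 : set (T -> R) := [set u : T -> R | measurable_fun setT u /\
  mu.-integrable setT (fun s => (rho s * `|u s| ^+ 2)%:E)].

Lemma weighted_L2_integrable_mul (u v : T -> R) : weighted_L2 u -> weighted_L2 v ->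
  mu.-integrable setT (EFin \o (fun s => rho s * u s * v s)).
Proof.
move=> [u_meas u_int] [v_meas v_int].
apply: (le_integrable measurableT _ _ (integrableD measurableT u_int v_int)).
  by apply/measurable_EFinP; do 2 apply: measurable_funM => //.
move=> s _ /=; rewrite lee_fin [leRHS]ger0_norm; last first.
  by apply: addr_ge0; apply: mulr_ge0.
rewrite -mulrA normrM (ger0_norm (rho_ge0 s)) -mulrDr ler_wpM2l //.
rewrite normrM; have := sqr_ge0 (`|u s| - `|v s|); nra.
Qed.

Lemma weighted_L2_lincomb_closed : lincomb_closed weighted_L2.
Proof.
split.
  split; first exact: measurable_cst.
  apply: (eq_integrable measurableT _ _ _ (integrable0 mu setT)) => s _.
  by rewrite normr0 expr0n /= mulr0.
move=> a x y Lx Ly; have [x_meas _] := Lx; have [y_meas _] := Ly.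
split; first by apply: measurable_funD => //; exact: measurable_funM.
have xx := weighted_L2_integrable_mul Lx Lx.
have xy := weighted_L2_integrable_mul Lx Ly.
have yy := weighted_L2_integrable_mul Ly Ly.
have := integrableD measurableT (integrableZl measurableT (a ^+ 2) xx)
  (integrableD measurableT (integrableZl measurableT (2 * a) xy) yy).
apply: (eq_integrable measurableT) => s _ /=.
rewrite -!EFinM -!EFinD real_normK ?num_real //.
have -> : (a *: x + y) s = a * x s + y s by [].
by congr EFin; ring.
Qed.

Lemma wint_sip : semi_inner_product weighted_L2 (wint mu rho).
Proof.
split=> [x y _ _|a x y z Lx Ly Lz|x _].
- by congr Rintegral; apply: funext => s; rewrite mulrAC.
- have xz := weighted_L2_integrable_mul Lx Lz.
  have yz := weighted_L2_integrable_mul Ly Lz.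
  rewrite /wint -RintegralZl // -RintegralD //; last first.
    apply: (eq_integrable measurableT _ _ _ (integrableZl measurableT a xz)).
    by move=> s _ /=; rewrite EFinM.
  congr Rintegral; apply: funext => s /=.
  have -> : (a *: x + y) s = a * x s + y s by [].
  by ring.
- by apply: Rintegral_ge0 => s _; rewrite -mulrA -expr2 mulr_ge0 ?sqr_ge0.
Qed.

End WeightedL2.

Theorem proposition5p1 (d : measure_display) (T : measurableType d) (R : realType)
  (mu : {measure set T -> \bar R}) (rho : T -> R) (n : nat)
  (f h : T -> R) (g : 'I_n -> T -> R) :
  measurable_fun setT rho -> (forall s, 0 <= rho s) ->
  measurable_fun setT f -> measurable_fun setT h ->
  (forall i, measurable_fun setT (g i)) ->
  mu.-integrable setT (fun s => (rho s * `|f s| ^+ 2)%:E) ->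
  mu.-integrable setT (fun s => (rho s * `|h s| ^+ 2)%:E) ->
  (forall i, mu.-integrable setT (fun s => (rho s * `|g i s| ^+ 2)%:E)) ->
  let I := wint mu rho in
  \sum_(i < n) (det2 (I f (g i)) (I f h) (I (g i) h) (I h h)) ^+ 2
  <= det2 (I f f) (I f h) (I f h) (I h h) *
     (\big[Num.max/0]_(i < n) det2 (I (g i) (g i)) (I (g i) h) (I (g i) h) (I h h)
      + Num.sqrt (\sum_(i < n) \sum_(j < n | j != i)
            (det2 (I (g j) (g i)) (I (g j) h) (I (g i) h) (I h h)) ^+ 2)).
Proof.
move=> rho_meas rho_ge0 f_meas h_meas g_meas f_int h_int g_int.
have L2_closed := weighted_L2_lincomb_closed mu rho_meas rho_ge0.
have I_sip := wint_sip mu rho_meas rho_ge0.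
have gram_sip := gram_det_sip L2_closed I_sip (conj h_meas h_int).
apply: (sip_bombieri L2_closed gram_sip (conj f_meas f_int)) => i.
exact: conj (g_meas i) (g_int i).
Qed.
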